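(* Let $p\in(1,\infty)$ and let $Y$ be a Banach space admitting an equivalent norm with $(\beta)$-modulus of power type $p$. Then there is a constant $C=C(Y)>0$ such that for every integer $h\ge2$, $$c_Y(T^\omega_h)\ge C\,\log(h)^{1/p}.$$
   Context: For a Banach space $X$ with closed unit ball $B_X$ and a sequence $(y_n)_{n\ge1}$ in $X$, let $\mathrm{sep}[(y_n)]:=\inf\{\|y_m-y_n\|: m\neq n\}$. The $(\beta)$-modulus of a norm is $$\overline{\beta}_X(t):=1-\sup\Big\{\inf_{n\ge1}\tfrac{\|x+y_n\|}{2}\ :\ x\in B_X,\ (y_n)_{n\ge1}\subset B_X,\ \mathrm{sep}[(y_n)]\ge t\Big\},$$ and the norm has $(\beta)$-modulus of power type $p$ if there is $c>0$ with $\overline{\beta}_X(t)\ge ct^p$ for all $t\in(0,2]$. For a positive integer $h$, $T^\omega_h$ is the complete countably branching rooted tree of height $h$: every vertex at distance $<h$ from the root has countably infinitely many children, and vertices at distance $h$ from the root are leaves; it carries the unweighted shortest-path metric. The distortion of an injective map $f\colon (M,d_M)\to(N,d_N)$ is $\mathrm{dist}(f)=\mathrm{Lip}(f)\mathrm{Lip}(f^{-1})$, and $c_Y(M):=\inf\{\mathrm{dist}(f): f\colon M\to Y\text{ injective}\}$ (which is $+\infty$ if no bi-Lipschitz embedding exists). *)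

From Stdlib Require Import Reals Lra List.
Open Scope R_scope.

Record NormedSpace := {
  V :> Type;
  vadd : V -> V -> V;
  vscal : R -> V -> V;
  vzero : V;
  vopp : V -> V;
  vnorm : V -> R;
  vadd_comm : forall x y, vadd x y = vadd y x;
  vadd_assoc : forall x y z, vadd x (vadd y z) = vadd (vadd x y) z;
  vadd_0 : forall x, vadd x vzero = x;
  vadd_opp : forall x, vadd x (vopp x) = vzero;
  vscal_1 : forall x, vscal 1 x = x;
  vscal_assoc : forall a b x, vscal a (vscal b x) = vscal (a * b) x;
  vscal_distr_v : forall a x y, vscal a (vadd x y) = vadd (vscal a x) (vscal a y);
  vscal_distr_s : forall a b x, vscal (a + b) x = vadd (vscal a x) (vscal b x);
  vnorm_nonneg : forall x, 0 <= vnorm x;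
  vnorm_def : forall x, vnorm x = 0 -> x = vzero;
  vnorm_scal : forall a x, vnorm (vscal a x) = Rabs a * vnorm x;
  vnorm_triangle : forall x y, vnorm (vadd x y) <= vnorm x + vnorm y
}.

Arguments vadd {_}. Arguments vscal {_}. Arguments vzero {_}.
Arguments vopp {_}. Arguments vnorm {_}.

Definition vsub {X : NormedSpace} (x y : X) : X := vadd x (vopp y).

Definition is_Banach (X : NormedSpace) : Prop :=
  forall u : nat -> X,
    (forall eps, 0 < eps -> exists N, forall m n, (N <= m)%nat -> (N <= n)%nat ->
        vnorm (vsub (u m) (u n)) < eps) ->
    exists l : X, forall eps, 0 < eps -> exists N, forall n, (N <= n)%nat ->
        vnorm (vsub (u n) l) < eps.

Definition is_norm (X : NormedSpace) (nrm : X -> R) : Prop :=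
  (forall x, 0 <= nrm x) /\
  (forall x, nrm x = 0 -> x = vzero) /\
  (forall a x, nrm (vscal a x) = Rabs a * nrm x) /\
  (forall x y, nrm (vadd x y) <= nrm x + nrm y).

Definition equivalent_norm (X : NormedSpace) (nrm : X -> R) : Prop :=
  is_norm X nrm /\
  exists a b, 0 < a /\ 0 < b /\
    forall x, a * vnorm x <= nrm x /\ nrm x <= b * vnorm x.

Definition sep_ge (X : NormedSpace) (nrm : X -> R) (y : nat -> X) (t : R) : Prop :=
  forall m n, m <> n -> t <= nrm (vsub (y m) (y n)).

(** [inf_{n>=1} nrm (x + y_n) / 2 <= s]  (indices are shifted to start at 0). *)
Definition inf_half_le (X : NormedSpace) (nrm : X -> R) (x : X) (y : nat -> X) (s : R) : Prop :=
  forall eps, 0 < eps -> exists n, nrm (vadd x (y n)) / 2 < s + eps.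

(** [sup { inf_n nrm(x+y_n)/2 : x, y_n in B, sep >= t } <= s]
    (with the convention sup of the empty set = -infinity). *)
Definition beta_sup_le (X : NormedSpace) (nrm : X -> R) (t s : R) : Prop :=
  forall (x : X) (y : nat -> X),
    nrm x <= 1 -> (forall n, nrm (y n) <= 1) -> sep_ge X nrm y t ->
    inf_half_le X nrm x y s.

(** [beta_bar(t) >= c t^p] for all [t] in (0,2], i.e.
    [sup {...} <= 1 - c t^p]. *)
Definition beta_power_type (X : NormedSpace) (nrm : X -> R) (p : R) : Prop :=
  exists c, 0 < c /\
    forall t, 0 < t -> t <= 2 -> beta_sup_le X nrm t (1 - c * Rpower t p).

(** Vertices: finite sequences of naturals of length <= h (root = nil);
    the children of [u] are [u ++ [k]], k : nat. *)
Definition tree_vertex (h : nat) (u : list nat) : Prop := (length u <= h)%nat.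

Definition tree_edge (u v : list nat) : Prop :=
  (exists k, v = u ++ k :: nil) \/ (exists k, u = v ++ k :: nil).

Inductive tree_walk (h : nat) : list nat -> list nat -> nat -> Prop :=
  | tw_refl : forall u, tree_vertex h u -> tree_walk h u u 0
  | tw_step : forall u w v n, tree_vertex h u -> tree_edge u w ->
      tree_walk h w v n -> tree_walk h u v (S n).

Definition tree_dist (h : nat) (u v : list nat) (d : nat) : Prop :=
  tree_walk h u v d /\ forall n, tree_walk h u v n -> (d <= n)%nat.

Definition tree_lip (Y : NormedSpace) (h : nat) (f : list nat -> Y) (a : R) : Prop :=
  forall u v d, tree_vertex h u -> tree_vertex h v -> tree_dist h u v d ->
    vnorm (vsub (f u) (f v)) <= a * INR d.

Definition tree_colip (Y : NormedSpace) (h : nat) (f : list nat -> Y) (b : R) : Prop :=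
  forall u v d, tree_vertex h u -> tree_vertex h v -> tree_dist h u v d ->
    INR d <= b * vnorm (vsub (f u) (f v)).

Definition tree_injective (Y : NormedSpace) (h : nat) (f : list nat -> Y) : Prop :=
  forall u v, tree_vertex h u -> tree_vertex h v -> f u = f v -> u = v.

(** [c_Y(T^omega_h) >= K]: every injective [f] has [Lip(f) Lip(f^{-1}) >= K]
    (with Lip = +infinity if no finite constant works). *)
Definition tree_distortion_ge (Y : NormedSpace) (h : nat) (K : R) : Prop :=
  forall f : list nat -> Y, tree_injective Y h f ->
    forall a b, 0 <= a -> 0 <= b -> tree_lip Y h f a -> tree_colip Y h f b ->
      K <= a * b.

From Stdlib Require Import Reals Lra Lia List IndefiniteDescription.
Open Scope R_scope.

(* Fix an equivalent norm of (beta)-power type p with constant c, and an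
   embedding f of T^omega_h of distortion D.  Say a vertical path of length
   2^j is lambda-compressed if its endpoints are mapped at distance at most
   lambda L 2^j.  Given a compressed path from a to u, extend it below u by
   compressed paths of the same length through each child of u: their
   endpoints are separated by the co-Lipschitz bound, so the (beta)-property
   yields one extension whose concatenation is more compressed, by a fixed
   amount eta ~ c D^-p.  After log2 h doublings the compression factor
   1 - eta log2 h must still be at least 1/D, so log h <~ D^p. *)

Lemma vopp_unique (X : NormedSpace) (a b : X) : vadd a b = vzero -> b = vopp a.
Proof.
  intro H. rewrite <- (vadd_0 X b), <- (vadd_opp X a), (vadd_assoc X b a).
  rewrite (vadd_comm X b a), H, vadd_comm, vadd_0. reflexivity.
Qed.

Lemma vadd_idem_0 (X : NormedSpace) (z : X) : vadd z z = z -> z = vzero.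
Proof.
  intro Hz. transitivity (vadd (vadd z z) (vopp z)).
  - rewrite <- vadd_assoc, vadd_opp, vadd_0. reflexivity.
  - rewrite Hz, vadd_opp. reflexivity.
Qed.

Lemma vscal_vzero (X : NormedSpace) r : vscal r (@vzero X) = vzero.
Proof. apply vadd_idem_0. rewrite <- vscal_distr_v, vadd_0. reflexivity. Qed.

Lemma vopp_vscal (X : NormedSpace) r (v : X) : vopp (vscal r v) = vscal r (vopp v).
Proof.
  symmetry; apply vopp_unique.
  rewrite <- vscal_distr_v, vadd_opp, vscal_vzero. reflexivity.
Qed.

Lemma vopp_vadd (X : NormedSpace) (a b : X) : vopp (vadd a b) = vadd (vopp a) (vopp b).
Proof.
  symmetry; apply vopp_unique. rewrite vadd_assoc, (vadd_comm X a b).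
  rewrite <- (vadd_assoc X b a), vadd_opp, vadd_0, vadd_opp. reflexivity.
Qed.

Lemma vopp_vopp (X : NormedSpace) (a : X) : vopp (vopp a) = a.
Proof. symmetry; apply vopp_unique; rewrite vadd_comm; apply vadd_opp. Qed.

Lemma vopp_eq_scal_m1 (X : NormedSpace) (z : X) : vopp z = vscal (-1) z.
Proof.
  symmetry; apply vopp_unique. rewrite <- (vscal_1 X z) at 1.
  rewrite <- vscal_distr_s. replace (1 + -1) with 0 by ring.
  apply vadd_idem_0. rewrite <- vscal_distr_s, Rplus_0_r. reflexivity.
Qed.

Lemma vadd_vsub_vsub (X : NormedSpace) (a u v : X) : vadd (vsub a u) (vsub u v) = vsub a v.
Proof.
  unfold vsub. rewrite <- vadd_assoc, (vadd_assoc X (vopp u) u).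
  rewrite (vadd_comm X (vopp u) u), vadd_opp, (vadd_comm X vzero), vadd_0.
  reflexivity.
Qed.

Lemma vsub_vsub_l (X : NormedSpace) (u m n : X) : vsub (vsub u m) (vsub u n) = vsub n m.
Proof.
  unfold vsub. rewrite vopp_vadd, vopp_vopp, (vadd_comm X (vopp u) n).
  rewrite (vadd_comm X u (vopp m)), <- vadd_assoc, (vadd_comm X n (vopp u)).
  rewrite (vadd_assoc X u (vopp u) n), vadd_opp, (vadd_comm X vzero n), vadd_0.
  apply vadd_comm.
Qed.

Lemma vsub_vscal (X : NormedSpace) r (x y : X) :
  vsub (vscal r x) (vscal r y) = vscal r (vsub x y).
Proof. unfold vsub. rewrite vopp_vscal, vscal_distr_v. reflexivity. Qed.

Section NormFacts.
Variables (X : NormedSpace) (nrm : X -> R).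
Hypothesis Hnorm : is_norm X nrm.

Lemma norm_vscal_nonneg r (x : X) : 0 <= r -> nrm (vscal r x) = r * nrm x.
Proof.
  destruct Hnorm as [_ [_ [Hs _]]]. intro Hr. rewrite Hs, Rabs_right; lra.
Qed.

Lemma norm_vsub_le (x y : X) : nrm (vsub x y) <= nrm x + nrm y.
Proof.
  destruct Hnorm as [_ [_ [Hs Htri]]]. unfold vsub.
  replace (nrm y) with (nrm (vopp y)) by
    (rewrite vopp_eq_scal_m1, Hs, Rabs_left; lra).
  apply Htri.
Qed.

Lemma sep_le_twice_radius (y : nat -> X) (Rad s : R) :
  (forall n, nrm (y n) <= Rad) -> sep_ge X nrm y s -> s <= 2 * Rad.
Proof.
  intros Hy Hsep. pose proof (Hsep 0%nat 1%nat ltac:(lia)).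
  pose proof (norm_vsub_le (y 0%nat) (y 1%nat)).
  pose proof (Hy 0%nat). pose proof (Hy 1%nat). lra.
Qed.

Lemma beta_fork p c (x : X) (y : nat -> X) (Rad s : R) :
  (forall t, 0 < t -> t <= 2 -> beta_sup_le X nrm t (1 - c * Rpower t p)) ->
  0 < s -> nrm x <= Rad -> (forall n, nrm (y n) <= Rad) -> sep_ge X nrm y s ->
  forall eps, 0 < eps ->
    exists n, nrm (vadd x (y n)) < 2 * Rad * (1 - c * Rpower (s / Rad) p + eps).
Proof.
  intros Hbeta Hs Hx Hy Hsep eps Heps.
  pose proof (sep_le_twice_radius y Rad s Hy Hsep) as Hs2.
  assert (HR : 0 < / Rad) by (apply Rinv_0_lt_compat; lra).
  destruct (Hbeta (s / Rad)) with (x := vscal (/ Rad) x) (y := fun n => vscal (/ Rad) (y n))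
    (eps := eps) as [n Hn]; auto.
  - apply Rdiv_lt_0_compat; lra.
  - apply Rmult_le_reg_r with Rad; [lra|]. unfold Rdiv. field_simplify; lra.
  - rewrite norm_vscal_nonneg by lra.
    apply Rmult_le_reg_l with Rad; [lra|]. field_simplify; lra.
  - intro n. rewrite norm_vscal_nonneg by lra. pose proof (Hy n).
    apply Rmult_le_reg_l with Rad; [lra|]. field_simplify; lra.
  - intros m n Hmn. rewrite vsub_vscal, norm_vscal_nonneg by lra.
    pose proof (Hsep m n Hmn). unfold Rdiv. rewrite Rmult_comm. nra.
  - exists n. rewrite <- vscal_distr_v, norm_vscal_nonneg in Hn by lra.
    apply Rmult_lt_reg_l with (/ Rad); [lra|].
    replace (/ Rad * (2 * Rad * (1 - c * Rpower (s / Rad) p + eps)))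
      with (2 * (1 - c * Rpower (s / Rad) p + eps)) by (field; lra).
    lra.
Qed.

End NormFacts.

Fixpoint lcp (x y : list nat) : nat :=
  match x, y with
  | a :: x', b :: y' => if Nat.eq_dec a b then S (lcp x' y') else 0%nat
  | _, _ => 0%nat
  end.

Lemma lcp_snoc_le x k y : (lcp (x ++ k :: nil) y <= S (lcp x y))%nat.
Proof.
  revert y; induction x as [|a x IH]; intros [|b y]; simpl; try lia.
  - destruct (Nat.eq_dec k b); simpl; lia.
  - destruct (Nat.eq_dec a b); try lia. specialize (IH y). lia.
Qed.

Lemma lcp_snoc_ge x k y : (lcp x y <= lcp (x ++ k :: nil) y)%nat.
Proof.
  revert y; induction x as [|a x IH]; intros [|b y]; simpl; try lia.
  destruct (Nat.eq_dec a b); try lia. specialize (IH y). lia.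
Qed.

Lemma lcp_diag y : lcp y y = length y.
Proof. induction y as [|a y IH]; simpl; auto. destruct (Nat.eq_dec a a); congruence. Qed.

Lemma lcp_app2 u l1 l2 : lcp (u ++ l1) (u ++ l2) = (length u + lcp l1 l2)%nat.
Proof. induction u as [|a u IH]; simpl; auto. destruct (Nat.eq_dec a a); congruence. Qed.

(* A walk between x and y must pass through their common ancestor. *)
Lemma tree_walk_length_ge h x y n :
  tree_walk h x y n -> (length x + length y <= n + 2 * lcp x y)%nat.
Proof.
  induction 1 as [u Hu | u w v n Hu He Hw IH].
  - rewrite lcp_diag. lia.
  - destruct He as [[k ->]|[k ->]].
    + rewrite length_app in IH. simpl in IH. pose proof (lcp_snoc_le u k v). lia.
    + rewrite length_app. simpl. pose proof (lcp_snoc_ge w k v). lia.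
Qed.

Lemma tree_walk_app h x y z n m :
  tree_walk h x y n -> tree_walk h y z m -> tree_walk h x z (n + m).
Proof. induction 1; intros; simpl; auto. eapply tw_step; eauto. Qed.

Lemma tree_walk_sym h x y n : tree_walk h x y n -> tree_walk h y x n.
Proof.
  induction 1 as [u Hu | u w v n Hu He Hw IH].
  - constructor; auto.
  - replace (S n) with (n + 1)%nat by lia. eapply tree_walk_app; [exact IH|].
    apply tw_step with (w := u).
    + destruct Hw; auto.
    + destruct He as [[k Hk]|[k Hk]]; [right|left]; exists k; auto.
    + constructor; auto.
Qed.

Lemma tree_walk_down h s : forall u,
  tree_vertex h (u ++ s) -> tree_walk h u (u ++ s) (length s).
Proof.
  induction s as [|k s IH]; intros u Hv.
  - rewrite app_nil_r in *. constructor; auto.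
  - apply tw_step with (w := u ++ k :: nil).
    + unfold tree_vertex in *. rewrite length_app in Hv. lia.
    + left; exists k; auto.
    + replace (u ++ k :: s) with ((u ++ k :: nil) ++ s) by (rewrite <- app_assoc; reflexivity).
      apply IH. rewrite <- app_assoc. exact Hv.
Qed.

Lemma tree_dist_prefix h u s : tree_vertex h (u ++ s) -> tree_dist h u (u ++ s) (length s).
Proof.
  intro Hv. split; [now apply tree_walk_down|].
  intros n Hn. apply tree_walk_length_ge in Hn.
  pose proof (lcp_app2 u nil s) as Hl. rewrite app_nil_r in Hl. simpl in Hl.
  rewrite Hl, length_app in Hn. lia.
Qed.

Lemma tree_dist_fork h u n m s s' : n <> m ->
  tree_vertex h (u ++ n :: s) -> tree_vertex h (u ++ m :: s') ->
  tree_dist h (u ++ n :: s) (u ++ m :: s') (S (length s) + S (length s')).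
Proof.
  intros Hnm Hn Hm. split.
  - apply tree_walk_app with u.
    + apply tree_walk_sym. exact (tree_walk_down h (n :: s) u Hn).
    + exact (tree_walk_down h (m :: s') u Hm).
  - intros d Hd. apply tree_walk_length_ge in Hd.
    rewrite lcp_app2, !length_app in Hd. simpl in Hd.
    destruct (Nat.eq_dec n m); [contradiction|]. lia.
Qed.

Lemma Rpower_1_l y : Rpower 1 y = 1.
Proof. unfold Rpower. rewrite ln_1, Rmult_0_r, exp_0. reflexivity. Qed.

Lemma Rpower_ge_1 x y : 1 <= x -> 0 <= y -> 1 <= Rpower x y.
Proof. intros Hx Hy. rewrite <- (Rpower_1_l y). apply Rle_Rpower_l; lra. Qed.

Lemma Rpower_le_self l p : 0 < l -> l <= 1 -> 1 < p -> Rpower l p <= l.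
Proof.
  intros H0 H1 Hp. replace p with (1 + (p - 1)) by ring.
  rewrite Rpower_plus, Rpower_1 by auto.
  assert (Rpower l (p - 1) <= Rpower 1 (p - 1)) by (apply Rle_Rpower_l; lra).
  rewrite Rpower_1_l in *. nra.
Qed.

(* With eta := c (2/D)^p / 2: fork radius lam, relative separation t = 2/(D lam). *)
Lemma compression_gain p c D lam t :
  1 < p -> 0 <= c -> 0 < t -> 0 < lam -> lam <= 1 -> t * lam = 2 / D ->
  lam * (1 - c * Rpower t p + c * Rpower (2 / D) p / 2) <= lam - c * Rpower (2 / D) p / 2.
Proof.
  intros Hp Hc Ht Hl0 Hl1 Htl.
  rewrite <- Htl, <- Rpower_mult_distr by auto.
  pose proof (Rpower_le_self lam p Hl0 Hl1 Hp) as HQ.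
  assert (HP : 0 < Rpower t p) by apply exp_pos.
  set (P := Rpower t p) in *. set (Q := Rpower lam p) in *.
  assert (HcP : 0 <= c * P) by nra.
  assert (Q * (lam + 1) <= 2 * lam) by nra.
  nra.
Qed.

Lemma depth_le_of_compression p c D x :
  0 < p -> 0 < c -> 0 < D -> 0 <= x ->
  1 <= (1 - x * (c * Rpower (2 / D) p / 2)) * D -> x <= 2 / c * Rpower D p.
Proof.
  intros Hp Hc HD Hx Hcomp.
  assert (H2 : Rpower (2 / D) p * Rpower D p = Rpower 2 p).
  { rewrite Rpower_mult_distr by (try apply Rdiv_lt_0_compat; lra).
    f_equal. field. lra. }
  pose proof (Rpower_ge_1 2 p ltac:(lra) ltac:(lra)).
  pose proof (exp_pos (p * ln (2 / D))). pose proof (exp_pos (p * ln D)).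
  fold (Rpower (2 / D) p) (Rpower D p) in *.
  assert (Heta : x * (c * Rpower (2 / D) p) < 2) by nra.
  apply Rmult_le_reg_l with c; [lra|]. field_simplify; [|lra]. nra.
Qed.

Lemma ln_lt_succ_log2 h : (1 <= h)%nat -> ln (INR h) < (INR (Nat.log2 h) + 1) * ln 2.
Proof.
  intro Hh. destruct (Nat.log2_spec h) as [_ Hlt]; [lia|].
  rewrite <- S_INR, <- ln_pow by lra.
  apply ln_increasing; [apply lt_0_INR; lia|].
  replace 2 with (INR 2) by reflexivity. rewrite <- pow_INR. apply lt_INR. exact Hlt.
Qed.

Lemma Rpower_inv_le x M D p :
  0 < x -> 0 < M -> 0 < D -> 0 < p -> x <= M * Rpower D p ->
  Rpower x (1 / p) <= Rpower M (1 / p) * D.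
Proof.
  intros Hx HM HD Hp Hle.
  apply Rle_trans with (Rpower (M * Rpower D p) (1 / p)).
  - apply Rle_Rpower_l; [apply Rlt_le, Rdiv_lt_0_compat|]; lra.
  - rewrite <- Rpower_mult_distr, Rpower_mult by (auto; apply exp_pos).
    replace (p * (1 / p)) with 1 by (field; lra). rewrite Rpower_1 by lra. lra.
Qed.

Section CompressedDescent.
Variables (Y : NormedSpace) (nrm : Y -> R) (p c : R) (h : nat) (f : list nat -> Y) (L bp : R).
Hypotheses (Hnorm : is_norm Y nrm) (Hp : 1 < p) (Hc : 0 < c)
  (Hbeta : forall t, 0 < t -> t <= 2 -> beta_sup_le Y nrm t (1 - c * Rpower t p))
  (HL : 0 <= L) (Hbp : 0 <= bp) (Hh : (1 <= h)%nat).
Hypothesis Hlip : forall u v d, tree_vertex h u -> tree_vertex h v -> tree_dist h u v d ->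
  nrm (vsub (f u) (f v)) <= L * INR d.
Hypothesis Hcolip : forall u v d, tree_vertex h u -> tree_vertex h v -> tree_dist h u v d ->
  INR d <= bp * nrm (vsub (f u) (f v)).

Let D := bp * L.
Let eta := c * Rpower (2 / D) p / 2.

Lemma one_le_distortion : 1 <= D.
Proof.
  assert (Hv : tree_vertex h (nil ++ 0%nat :: nil)) by (unfold tree_vertex; simpl; lia).
  assert (Hv0 : tree_vertex h nil) by (unfold tree_vertex; simpl; lia).
  pose proof (tree_dist_prefix h nil (0%nat :: nil) Hv) as Hd.
  pose proof (Hlip _ _ _ Hv0 Hv Hd). pose proof (Hcolip _ _ _ Hv0 Hv Hd).
  simpl in *. unfold D. nra.
Qed.

Lemma lip_colip_pos : 0 < L /\ 0 < bp.
Proof. pose proof one_le_distortion. unfold D in *. split; nra. Qed.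

Lemma fork_separation u (g : nat -> list nat) K :
  (1 <= K)%nat -> (forall n, length (g n) = (K - 1)%nat) ->
  (forall n, tree_vertex h (u ++ n :: g n)) ->
  sep_ge Y nrm (fun n => vsub (f u) (f (u ++ n :: g n))) (2 * INR K / bp).
Proof.
  intros HK Hg Hvert m n Hmn. rewrite vsub_vsub_l.
  pose proof (Hcolip _ _ _ (Hvert n) (Hvert m)
    (tree_dist_fork h u n m _ _ (not_eq_sym Hmn) (Hvert n) (Hvert m))) as Hd.
  rewrite !Hg in Hd.
  replace (S (K - 1) + S (K - 1))%nat with (2 * K)%nat in Hd by lia.
  rewrite mult_INR in Hd. destruct lip_colip_pos as [_ Hbp0].
  apply Rmult_le_reg_l with bp; [lra|]. field_simplify; simpl in Hd; lra.
Qed.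

Definition compressed_descents (j : nat) : Prop :=
  forall a k, (length a + 2 ^ j <= h)%nat -> exists s, length s = (2 ^ j - 1)%nat /\
    nrm (vsub (f a) (f (a ++ k :: s))) <= (1 - INR j * eta) * L * INR (2 ^ j).

Lemma compressed_descents_0 : compressed_descents 0.
Proof.
  intros a k Hlen. exists nil. split; [reflexivity|].
  assert (Hv : tree_vertex h (a ++ k :: nil))
    by (unfold tree_vertex; rewrite length_app; simpl in *; lia).
  assert (Ha : tree_vertex h a) by (unfold tree_vertex; simpl in *; lia).
  pose proof (Hlip _ _ _ Ha Hv (tree_dist_prefix h a _ Hv)). simpl in *. lra.
Qed.

Lemma compressed_descents_S j : compressed_descents j -> compressed_descents (S j).
Proof.
  intros IH a k Hlen. rewrite Nat.pow_succ_r' in *.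
  destruct (IH a k) as [s1 [Hs1 Hx]]; [lia|].
  set (K := (2 ^ j)%nat) in *. set (lam := 1 - INR j * eta) in *.
  assert (HK1 : (1 <= K)%nat) by (pose proof (Nat.pow_nonzero 2 j); lia).
  assert (HK : 0 < INR K) by (apply lt_0_INR; lia).
  destruct lip_colip_pos as [HL0 Hbp0].
  set (u := a ++ k :: s1) in *.
  destruct (functional_choice (fun n s => length s = (K - 1)%nat /\
              nrm (vsub (f u) (f (u ++ n :: s))) <= lam * L * INR K)) as [g Hg].
  { intro n. apply IH. unfold u. rewrite length_app. simpl. lia. }
  set (y := fun n => vsub (f u) (f (u ++ n :: g n))).
  assert (Hvert : forall n, tree_vertex h (u ++ n :: g n)).
  { intro n. unfold tree_vertex, u. rewrite !length_app. simpl. rewrite (proj1 (Hg n)). lia. }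
  assert (Hsep : sep_ge Y nrm y (2 * INR K / bp))
    by (apply fork_separation; auto; intro n; apply Hg).
  assert (Hy : forall n, nrm (y n) <= lam * L * INR K) by (intro n; apply Hg).
  assert (Hs : 0 < 2 * INR K / bp) by (apply Rdiv_lt_0_compat; lra).
  pose proof (sep_le_twice_radius Y nrm Hnorm y _ _ Hy Hsep) as Hrad.
  assert (Hlam : 0 < lam).
  { apply Rmult_lt_reg_r with (L * INR K); [nra|]. unfold Rdiv in Hrad. nra. }
  assert (Heta : 0 < eta).
  { unfold eta. assert (0 < Rpower (2 / D) p) by apply exp_pos. nra. }
  assert (Hlam1 : lam <= 1) by (unfold lam; pose proof (pos_INR j); nra).
  destruct (beta_fork Y nrm Hnorm p c (vsub (f a) (f u)) y _ _ Hbeta Hs Hx Hy Hsep eta)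
    as [n Hn]; [exact Heta|].
  exists (s1 ++ n :: g n). split.
  { rewrite length_app. simpl. rewrite (proj1 (Hg n)). lia. }
  unfold y in Hn. rewrite vadd_vsub_vsub in Hn.
  replace (a ++ k :: s1 ++ n :: g n) with (u ++ n :: g n) by (unfold u; rewrite <- app_assoc; reflexivity).
  set (t := 2 * INR K / bp / (lam * L * INR K)) in Hn.
  assert (Hgain : lam * (1 - c * Rpower t p + eta) <= lam - eta).
  { apply compression_gain; try lra.
    - unfold t. apply Rdiv_lt_0_compat; [lra | nra].
    - unfold t, D. field. repeat split; lra. }
  apply Rlt_le. eapply Rlt_le_trans; [exact Hn|].
  rewrite S_INR, mult_INR. replace (INR 2) with 2 by reflexivity.
  replace ((1 - (INR j + 1) * eta) * L * (2 * INR K)) with (2 * (L * INR K) * (lam - eta))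
    by (unfold lam; ring).
  replace (2 * (lam * L * INR K) * (1 - c * Rpower t p + eta))
    with (2 * (L * INR K) * (lam * (1 - c * Rpower t p + eta))) by ring.
  apply Rmult_le_compat_l; [nra | exact Hgain].
Qed.

Lemma compressed_descents_all j : compressed_descents j.
Proof. induction j; auto using compressed_descents_0, compressed_descents_S. Qed.

(* A descent of length 2^(log2 h) from the root cannot be compressed below 1/D. *)
Lemma log2_height_le : INR (Nat.log2 h) <= 2 / c * Rpower D p.
Proof.
  set (j := Nat.log2 h). destruct (Nat.log2_spec h) as [Hj _]; [lia|]. fold j in Hj.
  destruct (compressed_descents_all j nil 0%nat) as [s [Hs Hbd]]; [simpl; lia|].
  assert (Hv : tree_vertex h (nil ++ 0%nat :: s)) by (unfold tree_vertex; simpl; lia).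
  assert (Hv0 : tree_vertex h nil) by (unfold tree_vertex; simpl; lia).
  pose proof (Hcolip _ _ _ Hv0 Hv (tree_dist_prefix h nil _ Hv)) as Hcol.
  simpl length in Hcol. rewrite Hs in Hcol.
  replace (S (2 ^ j - 1)) with (2 ^ j)%nat in Hcol by (pose proof (Nat.pow_nonzero 2 j); lia).
  assert (HK : 0 < INR (2 ^ j)) by (apply lt_0_INR; pose proof (Nat.pow_nonzero 2 j); lia).
  destruct lip_colip_pos as [HL0 Hbp0].
  apply depth_le_of_compression; try lra; [unfold D; nra | apply pos_INR |].
  apply Rmult_le_reg_r with (INR (2 ^ j)); [lra|].
  apply Rmult_le_compat_l with (r := bp) in Hbd; [|lra].
  fold eta. replace ((1 - INR j * eta) * D * INR (2 ^ j))
    with (bp * ((1 - INR j * eta) * L * INR (2 ^ j))) by (unfold D; ring).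
  simpl app in *. lra.
Qed.

Lemma ln_height_le : ln (INR h) <= (2 / c + 1) * ln 2 * Rpower D p.
Proof.
  pose proof (ln_lt_succ_log2 h Hh). pose proof log2_height_le.
  assert (1 <= Rpower D p) by (apply Rpower_ge_1; [apply one_le_distortion | lra]).
  assert (0 < ln 2) by (rewrite <- ln_1; apply ln_increasing; lra).
  assert (0 < 2 / c) by (apply Rdiv_lt_0_compat; lra).
  nra.
Qed.

End CompressedDescent.

Lemma tree_lip_equivalent_norm (Y : NormedSpace) (nrm : Y -> R) h f a B :
  0 <= B -> (forall x, nrm x <= B * vnorm x) -> tree_lip Y h f a ->
  forall u v d, tree_vertex h u -> tree_vertex h v -> tree_dist h u v d ->
    nrm (vsub (f u) (f v)) <= B * a * INR d.
Proof.
  intros HB Heq Hlip u v d Hu Hv Hd. pose proof (Hlip u v d Hu Hv Hd) as Hd'.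
  pose proof (Heq (vsub (f u) (f v))).
  apply Rmult_le_compat_l with (r := B) in Hd'; [|lra]. lra.
Qed.

Lemma tree_colip_equivalent_norm (Y : NormedSpace) (nrm : Y -> R) h f b A :
  0 < A -> 0 <= b -> (forall x, A * vnorm x <= nrm x) -> tree_colip Y h f b ->
  forall u v d, tree_vertex h u -> tree_vertex h v -> tree_dist h u v d ->
    INR d <= b / A * nrm (vsub (f u) (f v)).
Proof.
  intros HA Hb Heq Hcol u v d Hu Hv Hd. pose proof (Hcol u v d Hu Hv Hd).
  pose proof (Heq (vsub (f u) (f v))).
  assert (b * vnorm (vsub (f u) (f v)) <= b / A * nrm (vsub (f u) (f v))).
  { apply Rmult_le_reg_l with A; [lra|].
    replace (A * (b / A * nrm (vsub (f u) (f v)))) with (b * nrm (vsub (f u) (f v)))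
      by (field; lra).
    nra. }
  lra.
Qed.

Theorem theorem2 (p : R) (Y : NormedSpace) :
  1 < p -> is_Banach Y ->
  (exists nrm : Y -> R, equivalent_norm Y nrm /\ beta_power_type Y nrm p) ->
  exists C : R, 0 < C /\
    forall h : nat, (2 <= h)%nat ->
      tree_distortion_ge Y h (C * Rpower (ln (INR h)) (1 / p)).
Proof.
  intros Hp _ [nrm [[Hnorm [A [B [HA [HB Heq]]]]] [c [Hc Hbeta]]]].
  set (M := (2 / c + 1) * ln 2).
  assert (HM : 0 < M).
  { assert (0 < ln 2) by (rewrite <- ln_1; apply ln_increasing; lra).
    assert (0 < 2 / c) by (apply Rdiv_lt_0_compat; lra). unfold M. nra. }
  assert (HRM : 0 < Rpower M (1 / p)) by apply exp_pos.
  exists (A / (B * Rpower M (1 / p))). split; [apply Rdiv_lt_0_compat; nra|].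
  intros h Hh f _ a b Ha Hb Hlip Hcolip.
  pose proof (tree_lip_equivalent_norm Y nrm h f a B ltac:(lra)
    (fun x => proj2 (Heq x)) Hlip) as Hlip'.
  pose proof (tree_colip_equivalent_norm Y nrm h f b A HA Hb
    (fun x => proj1 (Heq x)) Hcolip) as Hcolip'.
  assert (HBa : 0 <= B * a) by nra.
  assert (Hb' : 0 <= b / A) by (apply Rmult_le_pos; [lra | apply Rlt_le, Rinv_0_lt_compat; lra]).
  assert (Hh1 : (1 <= h)%nat) by lia.
  pose proof (ln_height_le Y nrm p c h f _ _ Hnorm Hp Hc Hbeta HBa Hb' Hh1 Hlip' Hcolip') as Hln.
  pose proof (one_le_distortion Y nrm h f _ _ Hb' Hh1 Hlip' Hcolip') as HD.
  assert (Hlnh : 0 < ln (INR h)).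
  { rewrite <- ln_1. apply ln_increasing; [lra|]. apply (lt_INR 1). lia. }
  pose proof (Rpower_inv_le _ M (b / A * (B * a)) p Hlnh HM ltac:(lra) ltac:(lra) Hln).
  replace (a * b) with (A / (B * Rpower M (1 / p)) * (Rpower M (1 / p) * (b / A * (B * a))))
    by (field; lra).
  apply Rmult_le_compat_l; [|lra]. apply Rlt_le, Rdiv_lt_0_compat; nra.
Qed.
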